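(* Let $z\in\mathbb{N}$, $z\ge1$, and let $\alpha\in\{0,1,2\}^*$ be the standard base-3 representation of $z$ (no leading zeros). Let $x_0<0$. In the limit configuration $c_\infty[\alpha]$, column $x_0$ contains a southmost cell $(x_0,y_b)$ whose sum bit is defined; its sum bit is $0$, all cells $(x_0,y)$ with $y_b<y\le|\alpha|$ are defined, and the base-$3'$ word $\gamma$ they give satisfies $[\![\gamma]\!]_{3'}=T^{|x_0|}(z)$.
   Context: The Collatz map $T:\mathbb{N}\to\mathbb{N}$ is $T(x)=x/2$ for even $x$ and $T(x)=(3x+1)/2$ for odd $x$. Notation: $E=(1,0)$, $W=(-1,0)$, $N=(0,1)$, $S=(0,-1)$ in $\mathbb{Z}^2$; $[P]\in\{0,1\}$ equals $1$ iff $P$ holds. Strings are indexed from the right: $\alpha=\alpha_{k-1}\cdots\alpha_0$; $[\![\alpha]\!]_3=\sum_i\alpha_i3^i$. Base $3'$: words over $\{0,\bar0,1,\bar1\}$ with trit values $0\mapsto0$, $\bar0\mapsto1$, $1\mapsto1$, $\bar1\mapsto2$, and $[\![\gamma]\!]_{3'}=\sum_i\mathrm{val}(\gamma_i)3^i$. The symbols $0,\bar0,1,\bar1$ are identified with the cell states $(0,0),(0,1),(1,0),(1,1)$. The encoding $\mathrm{enc}:\{0,1,2\}^*\to\{0,\bar0,1,\bar1\}^*$ acts symbol by symbol: $0\mapsto0$, $2\mapsto\bar1$, and a digit $\alpha_i=1$ maps to $1$ if there exists $j<i$ with $\alpha_j\ne1$ and the largest such $j$ has $\alpha_j=2$, and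 to $\bar0$ otherwise. A vertical contiguous segment of defined cells gives the base-$3'$ word formed by the cells' states read from north (most significant) to south (least significant). The CQCA. State set $\Sigma=\{0,1,\bot\}^2\setminus\{(\bot,0),(\bot,1)\}$; a state $(s,c)$ has sum bit $s$ and carry bit $c$; it is undefined if $(\bot,\bot)$, half-defined if $s\in\{0,1\},c=\bot$, defined if $s,c\in\{0,1\}$. One step $F(C)$ of a configuration $C:\mathbb{Z}^2\to\Sigma$: first the non-local rule gives $C'$: $C'(u)=(0,1)$ if $C(u+W)=(1,\bot)$, $C(u)\in\{(0,\bot),(\bot,\bot)\}$ and $C(u+iE)\in\{(0,\bot),(\bot,\bot)\}$ for all $i\ge1$; otherwise $C'(u)=C(u)$. Then the local rule on $C'$ at all cells simultaneously: (i) if $C'(u)=(s,\bot)$ half-defined and $C'(u+E)=(s',c')$ defined, $F(C)(u)=(s,[s+s'+c'\ge2])$; (ii) if $C'(u)=(\bot,\bot)$, $C'(u+N)=(s,\bot)$ half-defined and $C'(u+N+E)=(s',c')$ defined, $F(C)(u)=((s+s'+c')\bmod2,\bot)$; (iii) otherwise $F(C)(u)=C'(u)$. For $\alpha\in\{0,1,2\}^*$ with $\gamma=\mathrm{enc}(\alpha)$, the initial configuration $c_0[\alpha]$ is: $c_0[\alpha](0,i)=\gamma_{i-1}$ for $1\le i\le|\alpha|$, $c_0[\alpha](x,|\alpha|)=(0,\bot)$ for all $x<0$, and $(\bot,\bot)$ elsewhere. Each cell's state in $F^i(c_0[\alpha])$ is eventually constant; $c_\infty[\alpha]$ is the pointwise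 limit. *)

From Stdlib Require Import ZArith Arith List Bool ClassicalEpsilon.
Import ListNotations.
Open Scope Z_scope.

Definition T (x : nat) : nat :=
  if Nat.even x then (x / 2)%nat else ((3 * x + 1) / 2)%nat.

(** Base-3 words are lists of digits, least significant first:
    alpha = alpha_{k-1} ... alpha_0 is the list [alpha_0; ...; alpha_{k-1}]. *)
Fixpoint val3 (a : list nat) : nat :=
  match a with [] => 0%nat | d :: a' => (d + 3 * val3 a')%nat end.

Definition std_base3 (a : list nat) (z : nat) : Prop :=
  (forall d, In d a -> (d < 3)%nat) /\ last a 0%nat <> 0%nat /\ val3 a = z.

(** Cell states Sigma = {0,1,bot}^2 \ {(bot,0),(bot,1)}. *)
Inductive cell : Type :=
| Undef                      (* (bot,bot) *)
| Half (s : bool)            (* (s,bot) *)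
| Def (s c : bool).          (* (s,c) *)

Definition b2n (b : bool) : nat := if b then 1%nat else 0%nat.

(** Trit value of a defined cell: 0 -> 0, 0bar -> 1, 1 -> 1, 1bar -> 2. *)
Definition cval (k : cell) : nat :=
  match k with Def s c => (b2n s + b2n c)%nat | _ => 0%nat end.

Definition config := Z -> Z -> cell.

Definition quiet (k : cell) : Prop := k = Half false \/ k = Undef.

Definition nonlocal_cond (C : config) (x y : Z) : Prop :=
  C (x - 1) y = Half true /\ quiet (C x y) /\
  (forall i : Z, 1 <= i -> quiet (C (x + i) y)).

Definition nonlocal (C : config) : config := fun x y =>
  if excluded_middle_informative (nonlocal_cond C x y)
  then Def false true else C x y.

Definition local (C : config) : config := fun x y =>
  match C x y with
  | Half s =>
      match C (x + 1) y with
      | Def s' c' => Def s (Nat.leb 2 (b2n s + b2n s' + b2n c'))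
      | _ => Half s
      end
  | Undef =>
      match C x (y + 1), C (x + 1) (y + 1) with
      | Half s, Def s' c' => Half (xorb (xorb s s') c')
      | _, _ => Undef
      end
  | k => k
  end.

Definition F (C : config) : config := local (nonlocal C).

(** Encoding enc. prev_non1 a i = Some d iff the largest j < i with a_j <> 1
    exists and has a_j = d. *)
Fixpoint prev_non1 (a : list nat) (i : nat) : option nat :=
  match i with
  | O => None
  | S j => if Nat.eqb (nth j a 0%nat) 1 then prev_non1 a j else Some (nth j a 0%nat)
  end.

Definition enc_digit (a : list nat) (i : nat) : cell :=
  match nth i a 0%nat with
  | O => Def false false
  | 1%nat => if (match prev_non1 a i with Some 2%nat => true | _ => false end)
             then Def true false else Def false true
  | _ => Def true true
  end.

Definition c0 (a : list nat) : config := fun x y =>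
  let k := Z.of_nat (length a) in
  if (x =? 0) && (1 <=? y) && (y <=? k) then enc_digit a (Z.to_nat (y - 1))
  else if (x <? 0) && (y =? k) then Half false
  else Undef.

(** Pointwise limit c_infty[alpha]: the eventual value of each cell
    (chosen classically; Undef if a cell does not stabilise, which by the
    paper never happens). *)
Definition eventually_value (a : list nat) (x y : Z) (v : cell) : Prop :=
  exists N : nat, forall n : nat, (N <= n)%nat -> Nat.iter n F (c0 a) x y = v.

Definition c_inf (a : list nat) : config := fun x y =>
  match excluded_middle_informative (exists v, eventually_value a x y v) with
  | left H => proj1_sig (constructive_indefinite_description _ H)
  | right _ => Undef
  end.

Definition sum_defined (k : cell) : Prop :=
  match k with Undef => False | _ => True end.

Definition sum_bit_is (k : cell) (b : bool) : Prop :=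
  match k with Half s | Def s _ => s = b | Undef => False end.

Definition is_defined (k : cell) : Prop :=
  match k with Def _ _ => True | _ => False end.

(** Base-3' value of the vertical word of the n cells (x, y+1), ..., (x, y+n),
    read north (most significant) to south (least significant). *)
Fixpoint colval (C : config) (x y : Z) (n : nat) : nat :=
  match n with
  | O => 0%nat
  | S m => Nat.add (cval (C x (y + 1))) (Nat.mul 3 (colval C x (y + 1) m))
  end.

From Stdlib Require Import ZArith Arith List Lia Bool FunctionalExtensionality ClassicalEpsilon.
Open Scope Z_scope.

(* Write k = |alpha|, v_m = T^m(z) and let B_m <= 0 be minus
   the number of odd values among v_0, ..., v_(m-1).  We give a closed form
   [predicted alpha n] of the configuration F^n(c_0[alpha]): column 0 keeps
   the encoding of alpha (plus the carry cell (0,0) = (0,1) once z is odd and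
   the carries have arrived); for m >= 1, column -m lives in rows B_m .. k,
   row y in (B_m, k] holding the cell that computes, by base-3 long division
   of w = 2 v_m by 2, the digit of v_m at position y - B_m - 1.  That cell is
   half-defined at time m + k - y - 1 and defined from time m + k - y on; the
   bottom row B_m carries the sum bit 0 (and the carry 1 when v_m is odd).
   The file first collects the base-3 digit arithmetic and the bookkeeping of
   the Collatz orbit (v_m, w_m, B_m and the bound v_m < 3^(k - B_m)), then
   defines the closed form and proves it invariant under one step: the
   non-local rule fires exactly at the bottom cell of a column whose value is
   odd (producing the "+1" of 3v+1), and the local rule is checked region by
   region of a column.  The closed form stabilises, which identifies the limit
   c_inf, and reading a completed column -m gives back v_m. *)

Ltac bdestr := repeat match goal with
 | |- context [Z.ltb ?x ?y] => destruct (Z.ltb_spec x y)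
 | |- context [Z.leb ?x ?y] => destruct (Z.leb_spec x y)
 | |- context [Z.eqb ?x ?y] => destruct (Z.eqb_spec x y)
 end; cbn [andb orb negb].

Section Base3Digits.
Local Open Scope nat_scope.

Definition digit (N p : nat) : nat := (N / 3 ^ p) mod 3.

(* The parity of N / 3^q, i.e. the sum bit of the cell dividing N by 2 at
   position q. *)
Definition sbit (N q : nat) : bool := Nat.odd (N / 3 ^ q).

(* The defined cell that, in the long division of N by 2, produces the digit
   of N / 2 at position q - 1 (see [digit_cell_cval]). *)
Definition digit_cell (N q : nat) : cell :=
  Def (sbit N q) (Nat.leb 2 (b2n (sbit N q) + digit N (q - 1))).

Lemma b2n_odd_xor (s c : bool) : xorb s c = Nat.odd (b2n s + b2n c).
Proof. destruct s, c; reflexivity. Qed.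

Lemma div_pow3_succ (N q : nat) : N / 3 ^ S q = (N / 3 ^ q) / 3.
Proof. rewrite Nat.pow_succ_r', Nat.mul_comm, Nat.Div0.div_div; lia. Qed.

Lemma div_pow3_succ' (N q : nat) : N / 3 ^ S q = (N / 3) / 3 ^ q.
Proof. rewrite Nat.pow_succ_r', Nat.Div0.div_div. reflexivity. Qed.

Lemma sbit_step (N q : nat) : sbit N q = xorb (sbit N (S q)) (Nat.odd (digit N q)).
Proof.
  unfold sbit, digit. rewrite div_pow3_succ. set (P := N / 3 ^ q).
  rewrite (Nat.div_mod_eq P 3) at 1. rewrite Nat.odd_add, Nat.odd_mul. reflexivity.
Qed.

Lemma sbit_small (N q : nat) : N < 3 ^ q -> sbit N q = false.
Proof. intros. unfold sbit. rewrite Nat.div_small; auto. Qed.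

(* Halving in base 3: the low digit of P / 2 depends only on P mod 6, and is
   given by the sum and carry bits of the division cell. *)
Lemma half_digit_mod6 (P : nat) :
  (P / 2) mod 3 = b2n (Nat.odd (P / 3)) + b2n (Nat.leb 2 (b2n (Nat.odd (P / 3)) + P mod 3)).
Proof.
  pose proof (Nat.mod_upper_bound P 6 ltac:(lia)) as Hr.
  rewrite (Nat.div_mod_eq P 6). set (q := P / 6) in *. set (r := P mod 6) in *. clearbody q r.
  replace (6 * q + r) with (r + q * 2 * 3) by lia.
  rewrite Nat.div_add, Nat.Div0.mod_add, Nat.odd_add, Nat.odd_mul by lia.
  change (Nat.odd 2) with false. rewrite Bool.andb_false_r, Bool.xorb_false_r.
  replace (r + q * 2 * 3) with (r + q * 3 * 2) by lia.
  rewrite Nat.div_add, Nat.Div0.mod_add by lia.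
  destruct r as [|[|[|[|[|[|r]]]]]]; try lia; reflexivity.
Qed.

Lemma digit_cell_cval (N q : nat) : 1 <= q -> cval (digit_cell N q) = digit (N / 2) (q - 1).
Proof.
  intros Hq. destruct q as [|p]; [lia|].
  unfold cval, digit_cell, sbit, digit. replace (S p - 1) with p by lia.
  rewrite div_pow3_succ, (Nat.Div0.div_div N 2), (Nat.mul_comm 2), <- Nat.Div0.div_div.
  symmetry. apply half_digit_mod6.
Qed.

Lemma digit_3v1 (v p : nat) : digit (3 * v + 1) (S p) = digit v p.
Proof.
  unfold digit. rewrite div_pow3_succ'.
  replace (3 * v + 1) with (1 + v * 3) by lia. rewrite Nat.div_add; [reflexivity | lia].
Qed.

Lemma digit_3v1_0 (v : nat) : digit (3 * v + 1) 0 = 1.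
Proof.
  unfold digit. rewrite Nat.pow_0_r, Nat.div_1_r.
  replace (3 * v + 1) with (1 + v * 3) by lia. rewrite Nat.Div0.mod_add. reflexivity.
Qed.

Lemma sbit_3v1_1 (v : nat) : sbit (3 * v + 1) 1 = Nat.odd v.
Proof.
  unfold sbit. rewrite Nat.pow_1_r.
  replace (3 * v + 1) with (1 + v * 3) by lia. rewrite Nat.div_add; [reflexivity | lia].
Qed.

Lemma val3_digit (a : list nat) (i : nat) :
  (forall d, In d a -> d < 3) -> digit (val3 a) i = nth i a 0.
Proof.
  revert i. induction a as [|d a IH]; intros i Ha.
  - unfold digit. simpl. rewrite Nat.Div0.div_0_l. destruct i; reflexivity.
  - assert (Hd : d < 3) by (apply Ha; left; auto).
    change (val3 (d :: a)) with (d + 3 * val3 a). unfold digit.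
    replace (d + 3 * val3 a) with (d + val3 a * 3) by lia.
    destruct i as [|i].
    + rewrite Nat.pow_0_r, Nat.div_1_r, Nat.Div0.mod_add. apply Nat.mod_small; auto.
    + rewrite div_pow3_succ', Nat.div_add, (Nat.div_small d 3) by lia.
      apply IH. intros; apply Ha; right; auto.
Qed.

Lemma val3_bound (a : list nat) : (forall d, In d a -> d < 3) -> val3 a < 3 ^ length a.
Proof.
  induction a as [|d a IH]; intros Ha; simpl; [lia|].
  assert (d < 3) by (apply Ha; left; auto).
  assert (val3 a < 3 ^ length a) by (apply IH; intros; apply Ha; right; auto).
  lia.
Qed.

End Base3Digits.

Lemma colval_digits (C : config) (x : Z) (n : nat) (y0 : Z) (q0 V : nat) :
  (forall i, (i < n)%nat -> cval (C x (y0 + 1 + Z.of_nat i)) = digit V (q0 + i)) ->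
  colval C x y0 n = ((V / 3 ^ q0) mod 3 ^ n)%nat.
Proof.
  revert y0 q0. induction n as [|n IH]; intros y0 q0 H.
  - cbn [colval]. rewrite Nat.pow_0_r, Nat.mod_1_r. reflexivity.
  - cbn [colval]. rewrite (IH (y0 + 1) (S q0)).
    + rewrite (Nat.pow_succ_r' 3 n), Nat.Div0.mod_mul_r, div_pow3_succ.
      specialize (H 0%nat ltac:(lia)). rewrite Z.add_0_r, Nat.add_0_r in H.
      rewrite H. unfold digit. lia.
    + intros i Hi. specialize (H (S i) ltac:(lia)).
      replace (y0 + 1 + 1 + Z.of_nat i) with (y0 + 1 + Z.of_nat (S i)) by lia.
      rewrite H. f_equal. lia.
Qed.

Definition east_rule (s : bool) (east : cell) : cell :=
  match east with Def s' c' => Def s (Nat.leb 2 (b2n s + b2n s' + b2n c')) | _ => Half s end.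

Definition below_rule (north northeast : cell) : cell :=
  match north, northeast with
  | Half s, Def s' c' => Half (xorb (xorb s s') c')
  | _, _ => Undef
  end.

Definition local_cell (here east north northeast : cell) : cell :=
  match here with
  | Half s => east_rule s east
  | Undef => below_rule north northeast
  | k => k
  end.

Lemma local_unfold (C : config) (x y : Z) :
  local C x y = local_cell (C x y) (C (x + 1) y) (C x (y + 1)) (C (x + 1) (y + 1)).
Proof. unfold local, local_cell, east_rule, below_rule. destruct (C x y); reflexivity. Qed.

Lemma east_rule_quiet (s : bool) (e : cell) : quiet e -> east_rule s e = Half s.
Proof. intros [-> | ->]; reflexivity. Qed.

Lemma below_rule_quiet (north e : cell) : quiet e -> below_rule north e = Undef.
Proof. intros [-> | ->]; destruct north; reflexivity. Qed.

Lemma local_cell_no_east (here north : cell) : local_cell here Undef north Undef = here.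
Proof. destruct here, north; reflexivity. Qed.

Section Evolution.

Variable a : list nat.
Hypothesis a_digits : forall d, In d a -> (d < 3)%nat.
Hypothesis a_pos : (1 <= val3 a)%nat.

(* v_m = T^m(z), and w_m = 3 v_m + 1 or v_m according to the parity of v_m,
   so that v_(m+1) = w_m / 2. *)
Definition orbit (m : nat) : nat := Nat.iter m T (val3 a).
Definition numer (m : nat) : nat :=
  if Nat.odd (orbit m) then (3 * orbit m + 1)%nat else orbit m.

(* B_m: the bottom row of column -m, one row lower for each odd v_j, j < m. *)
Fixpoint bottom (m : nat) : Z :=
  match m with O => 0 | S j => bottom j - (if Nat.odd (orbit j) then 1 else 0) end.

Definition height : Z := Z.of_nat (length a).

Lemma orbit_succ (j : nat) : orbit (S j) = (numer j / 2)%nat.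
Proof.
  unfold numer. change (orbit (S j)) with (T (orbit j)). unfold T.
  rewrite <- Nat.negb_odd. destruct (Nat.odd (orbit j)); reflexivity.
Qed.

Lemma numer_even (j : nat) : Nat.odd (numer j) = false.
Proof.
  unfold numer. destruct (Nat.odd (orbit j)) eqn:E; auto.
  rewrite Nat.odd_add, Nat.odd_mul, E. reflexivity.
Qed.

Lemma T_pos (x : nat) : (1 <= x)%nat -> (1 <= T x)%nat.
Proof.
  intros Hx. unfold T. destruct (Nat.even x) eqn:E.
  - apply Nat.even_spec in E. destruct E as [q ->].
    rewrite Nat.mul_comm, Nat.div_mul; lia.
  - assert (2 <= (3 * x + 1) / 2)%nat; [apply Nat.div_le_lower_bound|]; lia.
Qed.

Lemma orbit_pos (m : nat) : (1 <= orbit m)%nat.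
Proof. induction m; [exact a_pos | apply T_pos; exact IHm]. Qed.

Lemma bottom_succ (j : nat) :
  bottom (S j) = bottom j - (if Nat.odd (orbit j) then 1 else 0).
Proof. reflexivity. Qed.

Lemma bottom_succ_bounds (j : nat) : bottom j - 1 <= bottom (S j) <= bottom j.
Proof. rewrite bottom_succ. destruct (Nat.odd (orbit j)); lia. Qed.

Lemma bottom_antitone (m1 m2 : nat) : (m1 <= m2)%nat -> bottom m2 <= bottom m1.
Proof.
  induction 1 as [|m _ IH]; [lia|]. pose proof (bottom_succ_bounds m). lia.
Qed.

Lemma bottom_flat_even (m1 m2 : nat) :
  (m1 < m2)%nat -> bottom m1 = bottom m2 -> Nat.odd (orbit m1) = false.
Proof.
  intros Hlt E. pose proof (bottom_antitone (S m1) m2 Hlt) as H.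
  rewrite bottom_succ in H. destruct (Nat.odd (orbit m1)); auto. lia.
Qed.

(* Multiplying by 3 costs one row at the bottom, so v_m always fits in the
   k - B_m rows of column -m; in particular B_m < k. *)
Lemma orbit_bound (m : nat) :
  (orbit m < 3 ^ Z.to_nat (height - bottom m))%nat /\ bottom m < height.
Proof.
  induction m as [|m [IH1 IH2]].
  - pose proof (val3_bound a a_digits) as Hb. unfold height. cbn [bottom orbit Nat.iter].
    rewrite Z.sub_0_r, Nat2Z.id. split; auto.
    destruct (length a) eqn:E; [simpl in Hb; lia | lia].
  - assert (Hw : (numer m < 3 ^ Z.to_nat (height - bottom (S m)))%nat).
    { rewrite bottom_succ. unfold numer. destruct (Nat.odd (orbit m)).
      - replace (Z.to_nat (height - (bottom m - 1))) with (S (Z.to_nat (height - bottom m)))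
          by lia. rewrite Nat.pow_succ_r'. lia.
      - rewrite Z.sub_0_r. auto. }
    pose proof (orbit_pos (S m)).
    assert (Hv : (orbit (S m) < 3 ^ Z.to_nat (height - bottom (S m)))%nat).
    { rewrite orbit_succ. pose proof (Nat.Div0.div_le_upper_bound (numer m) 2 (numer m)). lia. }
    split; auto.
    destruct (Z_lt_le_dec (bottom (S m)) height); auto.
    replace (Z.to_nat (height - bottom (S m))) with 0%nat in Hv by lia.
    rewrite Nat.pow_0_r in Hv. lia.
Qed.

Lemma bottom_lt_height (m : nat) : bottom m < height.
Proof. apply orbit_bound. Qed.

Lemma numer_bound (m : nat) : (numer m < 3 ^ Z.to_nat (height - bottom (S m)))%nat.
Proof.
  destruct (orbit_bound m) as [Hv _]. rewrite bottom_succ. unfold numer.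
  destruct (Nat.odd (orbit m)).
  - replace (Z.to_nat (height - (bottom m - 1))) with (S (Z.to_nat (height - bottom m)))
      by (pose proof (bottom_lt_height m); lia).
    rewrite Nat.pow_succ_r'. lia.
  - rewrite Z.sub_0_r. auto.
Qed.

Lemma numer_digit (j : nat) (y : Z) : bottom j < y ->
  digit (numer j) (Z.to_nat (y - bottom (S j) - 1)) = digit (orbit j) (Z.to_nat (y - bottom j - 1)).
Proof.
  intros Hy. rewrite bottom_succ. unfold numer. destruct (Nat.odd (orbit j)).
  - replace (Z.to_nat (y - (bottom j - 1) - 1)) with (S (Z.to_nat (y - bottom j - 1))) by lia.
    apply digit_3v1.
  - f_equal. f_equal. lia.
Qed.

(* For m = S j, D = m + k - y
   is the time from which cell (-m, y) is defined, its state being the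
   division cell of w_j at position q = y - B_m (at the bottom q = 0 this is
   (0,1) if v_m is odd, produced by the non-local rule, and (0,bot) before). *)
Definition column (n m : nat) (y : Z) : cell :=
  let k := height in let nz := Z.of_nat n in
  match m with
  | O => if (1 <=? y) && (y <=? k) then enc_digit a (Z.to_nat (y - 1))
         else if (y =? 0) && Nat.odd (orbit 0) && (k + 1 <=? nz) then Def false true
         else Undef
  | S j =>
     let D := Z.of_nat m + k - y in let N := numer j in let q := y - bottom m in
     if k <? y then Undef
     else if y =? k then (if D <=? nz then digit_cell N (Z.to_nat q) else Half false)
     else if 0 <? q then
       (if D <=? nz then digit_cell N (Z.to_nat q)
        else if nz + 1 =? D then Half (sbit N (Z.to_nat q)) else Undef)
     else if q =? 0 then
       (if Nat.odd (orbit m) then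
          (if D + 1 <=? nz then Def false true else if D <=? nz + 1 then Half false else Undef)
        else if D <=? nz + 1 then Half false else Undef)
     else Undef
  end.

Definition predicted (n : nat) : config := fun x y =>
  if 0 <? x then Undef else column n (Z.to_nat (- x)) y.

Lemma predicted_column (n m : nat) (y : Z) : predicted n (- Z.of_nat m) y = column n m y.
Proof. unfold predicted. bdestr; [lia|]. f_equal. lia. Qed.

Lemma column_above (n j : nat) (y : Z) : height < y -> column n (S j) y = Undef.
Proof. intros. unfold column. bdestr; lia || auto. Qed.

Lemma column_top (n j : nat) : column n (S j) height =
  if Z.of_nat (S j) <=? Z.of_nat n then digit_cell (numer j) (Z.to_nat (height - bottom (S j)))
  else Half false.
Proof. pose proof (bottom_lt_height (S j)). unfold column. bdestr; try lia; auto. Qed.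

Lemma column_digit (n j : nat) (y : Z) : bottom (S j) < y < height ->
  column n (S j) y =
  let D := Z.of_nat (S j) + height - y in
  if D <=? Z.of_nat n then digit_cell (numer j) (Z.to_nat (y - bottom (S j)))
  else if Z.of_nat n + 1 =? D then Half (sbit (numer j) (Z.to_nat (y - bottom (S j))))
  else Undef.
Proof. intros. unfold column. bdestr; try lia; auto. Qed.

Lemma column_bottom (n j : nat) : column n (S j) (bottom (S j)) =
  let D := Z.of_nat (S j) + height - bottom (S j) in
  if Nat.odd (orbit (S j)) then
    (if D + 1 <=? Z.of_nat n then Def false true
     else if D <=? Z.of_nat n + 1 then Half false else Undef)
  else if D <=? Z.of_nat n + 1 then Half false else Undef.
Proof. pose proof (bottom_lt_height (S j)). unfold column. bdestr; try lia; auto. Qed.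

Lemma column_below (n j : nat) (y : Z) : y < bottom (S j) -> column n (S j) y = Undef.
Proof. pose proof (bottom_lt_height (S j)). intros. unfold column. bdestr; try lia; auto. Qed.

Lemma enc_digit_cval (i : nat) :
  exists s c, enc_digit a i = Def s c /\ (b2n s + b2n c = nth i a 0)%nat.
Proof.
  unfold enc_digit.
  assert (Hlt : (nth i a 0 < 3)%nat).
  { destruct (Nat.lt_ge_cases i (length a)).
    - apply a_digits, nth_In. auto.
    - rewrite nth_overflow; auto. }
  destruct (nth i a 0%nat) as [|[|[|d]]].
  - exists false, false. auto.
  - destruct (match prev_non1 a i with Some 2%nat => true | _ => false end).
    + exists true, false; auto.
    + exists false, true; auto.
  - exists true, true; auto.
  - lia.
Qed.

Lemma column0_not_half (n : nat) (y : Z) (s : bool) : column n 0 y <> Half s.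
Proof.
  unfold column. bdestr;
    first [ destruct (enc_digit_cval (Z.to_nat (y - 1))) as [s' [c [-> _]]]; discriminate
          | destruct (Nat.odd (orbit 0)); cbn [andb]; bdestr; discriminate ].
Qed.

Lemma column_half_true (n m : nat) (y : Z) : column n m y = Half true ->
  exists j, m = S j /\ y < height /\ 0 < y - bottom m /\
            Z.of_nat n + 1 = Z.of_nat m + height - y.
Proof.
  intros Hh. destruct m as [|j]; [exfalso; exact (column0_not_half n y true Hh)|].
  exists j. split; auto. unfold column in Hh. revert Hh. bdestr; intro Hh;
    first [ discriminate | (unfold digit_cell in Hh; discriminate)
          | (destruct (Nat.odd (orbit (S j))); revert Hh; bdestr; discriminate)
          | (split; [lia|]; split; [lia|]; congruence) | idtac ].
  all: injection Hh; intros; subst; lia.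
Qed.

(* The non-local rule fires at time n exactly at the bottom cell (-m, B_m)
   of a column with v_m odd, at the moment n = m + k - B_m when the sum bit
   1 of the low digit of w_m = 3 v_m + 1 arrives from the west. *)
Definition fires (n m : nat) (y : Z) : bool :=
  (y =? bottom m) && Nat.odd (orbit m) && (Z.of_nat n =? Z.of_nat m + height - y).

Definition column_nl (n m : nat) (y : Z) : cell :=
  if fires n m y then Def false true else column n m y.

Definition predicted_nl (n : nat) : config := fun x y =>
  if 0 <? x then Undef else column_nl n (Z.to_nat (- x)) y.

Lemma predicted_nl_column (n m : nat) (y : Z) :
  predicted_nl n (- Z.of_nat m) y = column_nl n m y.
Proof. unfold predicted_nl. bdestr; [lia|]. f_equal. lia. Qed.

Lemma column_nl_off_bottom (n m : nat) (y : Z) :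
  y <> bottom m -> column_nl n m y = column n m y.
Proof. intros. unfold column_nl, fires. destruct (Z.eqb_spec y (bottom m)); [lia | reflexivity]. Qed.

Lemma east_cell_defined (n j : nat) (y : Z) :
  bottom (S j) < y <= height -> Z.of_nat j + height - y <= Z.of_nat n ->
  exists s c, column_nl n j y = Def s c /\
    (b2n s + b2n c = digit (numer j) (Z.to_nat (y - bottom (S j) - 1)))%nat.
Proof.
  intros Hy Hn. pose proof (bottom_lt_height j).
  destruct (Z.eq_dec y (bottom j)) as [Ey|Ey].
  - (* The bottom cell of an odd column holds the carry (0,1), i.e. the low
       digit 1 of w_j = 3 v_j + 1. *)
    assert (Hodd : Nat.odd (orbit j) = true).
    { rewrite bottom_succ in Hy. destruct (Nat.odd (orbit j)); auto. lia. }
    assert (Hd : digit (numer j) (Z.to_nat (y - bottom (S j) - 1)) = 1%nat).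
    { rewrite bottom_succ, Hodd. replace (Z.to_nat (y - (bottom j - 1) - 1)) with 0%nat by lia.
      unfold numer; rewrite Hodd. apply digit_3v1_0. }
    rewrite Hd. exists false, true. split; auto.
    unfold column_nl, fires. rewrite Hodd. bdestr; try lia; auto.
    destruct j as [|i]; unfold column; cbn [bottom] in Ey; subst y; bdestr; try lia;
      rewrite Hodd; bdestr; try lia; reflexivity.
  -
    assert (Hgt : bottom j < y) by (pose proof (bottom_succ_bounds j); lia).
    rewrite numer_digit by auto. rewrite column_nl_off_bottom by auto.
    destruct j as [|i].
    + destruct (enc_digit_cval (Z.to_nat (y - 1))) as [s [c [E1 E2]]].
      exists s, c. cbn [bottom] in *. change (orbit 0) with (val3 a).
      rewrite E2, (val3_digit a _ a_digits). unfold column.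
      bdestr; try lia; split; auto; f_equal; lia.
    + assert (Hcol : column n (S i) y = digit_cell (numer i) (Z.to_nat (y - bottom (S i))))
        by (unfold column; bdestr; try lia; reflexivity).
      rewrite Hcol. do 2 eexists. split; [reflexivity|].
      change (cval (digit_cell (numer i) (Z.to_nat (y - bottom (S i))))
              = digit (orbit (S i)) (Z.to_nat (y - bottom (S i) - 1))).
      rewrite digit_cell_cval, <- orbit_succ by lia. f_equal. lia.
Qed.

Definition quiet_zone (n m : nat) (y : Z) : Prop :=
  y < bottom m \/
  (y = bottom m /\ (Nat.odd (orbit m) = false \/ Z.of_nat n <= Z.of_nat m + height - y)).

Lemma column_quiet (n m : nat) (y : Z) : quiet_zone n m y -> quiet (column n m y).
Proof.
  intros H. unfold quiet_zone in H. pose proof (bottom_lt_height m). unfold quiet.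
  destruct m as [|i].
  - unfold column. cbn [bottom] in *. bdestr; try lia; auto;
      destruct (Nat.odd (orbit 0)) eqn:E; cbn [andb]; auto;
      exfalso; destruct H as [H|[H [H'|H']]]; try lia; congruence.
  - unfold column. bdestr; try lia; auto;
      destruct (Nat.odd (orbit (S i))) eqn:E; bdestr; try lia; auto;
      exfalso; destruct H as [H|[H [H'|H']]]; try lia; congruence.
Qed.

(* Columns east of column -m lie below their bottom at rows y <= B_m, or
   exactly at it after an even value: their bottoms are at least B_m, and
   equal to B_m only when no odd value intervened. *)
Lemma east_below_bottom (m m' : nat) (y : Z) : (m' < m)%nat -> y <= bottom m ->
  y < bottom m' \/ (y = bottom m' /\ Nat.odd (orbit m') = false).
Proof.
  intros Hm Hy. pose proof (bottom_antitone m' m ltac:(lia)).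
  destruct (Z.eq_dec y (bottom m')); [|left; lia].
  right. split; [lia|]. apply (bottom_flat_even m' m); lia.
Qed.

Lemma column_quiet_east (n m m' : nat) (y : Z) :
  (m' < m)%nat -> y <= bottom m -> quiet (column n m' y).
Proof.
  intros Hm Hy. apply column_quiet.
  destruct (east_below_bottom m m' y Hm Hy) as [H|[H H']]; [left | right]; auto.
Qed.

Lemma column_nl_quiet_east (n m m' : nat) (y : Z) :
  (m' < m)%nat -> y <= bottom m -> quiet (column_nl n m' y).
Proof.
  intros Hm Hy. unfold column_nl, fires.
  destruct (east_below_bottom m m' y Hm Hy) as [H|[H H']].
  - destruct (Z.eqb_spec y (bottom m')); [lia|]. apply (column_quiet_east n m); auto.
  - rewrite H'. rewrite andb_false_r. apply (column_quiet_east n m); auto.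
Qed.

(* The non-local condition singles out the fired cells: a west neighbour
   (1,bot) only occurs one step before a digit cell is defined, and the cell
   itself must be quiet, which forces it to be the bottom of an odd column. *)
Lemma nonlocal_cond_fires (n : nat) (x y : Z) :
  nonlocal_cond (predicted n) x y -> x <= 0 /\ fires n (Z.to_nat (- x)) y = true.
Proof.
  intros [Hwest [Hhere _]]. unfold predicted in Hwest. revert Hwest.
  bdestr; intro Hwest; [discriminate|].
  destruct (column_half_true _ _ _ Hwest) as [j [Ej [Hy [Hq Hn]]]].
  assert (Ex : x = - Z.of_nat j) by lia. subst x. split; [lia|].
  replace (Z.to_nat (- - Z.of_nat j)) with j by lia. rewrite Ej in *.
  rewrite predicted_column in Hhere. pose proof (bottom_succ_bounds j).
  assert (Ey : y = bottom j).
  { destruct (Z.eq_dec y (bottom j)) as [|Hne]; auto. exfalso.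
    destruct (east_cell_defined n j y ltac:(lia) ltac:(lia)) as [s [c [E _]]].
    rewrite column_nl_off_bottom in E by auto. rewrite E in Hhere.
    destruct Hhere; discriminate. }
  assert (Hodd : Nat.odd (orbit j) = true).
  { rewrite bottom_succ in Hq. destruct (Nat.odd (orbit j)); auto. lia. }
  unfold fires. rewrite Hodd. bdestr; lia.
Qed.

(* Conversely a fired cell has the west neighbour (1,bot) = sum bit of the
   digit 1 of 3 v_m + 1, is itself quiet, and has quiet cells to its east. *)
Lemma fires_nonlocal_cond (n : nat) (x y : Z) :
  x <= 0 -> fires n (Z.to_nat (- x)) y = true -> nonlocal_cond (predicted n) x y.
Proof.
  intros Hx Hf. set (m := Z.to_nat (- x)) in *.
  assert (Ex : x = - Z.of_nat m) by lia. clearbody m. subst x.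
  unfold fires in Hf. apply andb_prop in Hf as [Hf Htime].
  apply andb_prop in Hf as [Hy Hodd]. apply Z.eqb_eq in Hy, Htime.
  pose proof (bottom_lt_height m). split; [|split].
  - replace (- Z.of_nat m - 1) with (- Z.of_nat (S m)) by lia.
    rewrite predicted_column. unfold column. rewrite bottom_succ, Hodd. bdestr; try lia.
    f_equal. replace (Z.to_nat (y - (bottom m - 1))) with 1%nat by lia.
    unfold numer. rewrite Hodd, sbit_3v1_1. exact Hodd.
  - rewrite predicted_column. apply column_quiet. right. split; [lia|]. right. lia.
  - intros i Hi. unfold predicted. bdestr; [unfold quiet; auto|].
    apply (column_quiet_east n m); lia.
Qed.

Lemma nonlocal_predicted (n : nat) : nonlocal (predicted n) = predicted_nl n.
Proof.
  extensionality x. extensionality y. unfold nonlocal.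
  destruct (excluded_middle_informative (nonlocal_cond (predicted n) x y)) as [H|H].
  - apply nonlocal_cond_fires in H as [Hx Hf]. unfold predicted_nl, column_nl.
    rewrite Hf. bdestr; [lia | reflexivity].
  - unfold predicted_nl, column_nl, predicted. bdestr; auto.
    destruct (fires n (Z.to_nat (- x)) y) eqn:E; auto.
    exfalso. apply H, fires_nonlocal_cond; auto; lia.
Qed.

Lemma column_nl_top_waiting (n j : nat) :
  (1 <= j)%nat -> Z.of_nat n < Z.of_nat j -> column_nl n j height = Half false.
Proof.
  intros Hj Hn. pose proof (bottom_lt_height j).
  rewrite column_nl_off_bottom by lia. destruct j as [|i]; [lia|].
  rewrite column_top. bdestr; [lia | reflexivity].
Qed.

(* Row y+1 of column -(j+1) at the front of the computation: the cell
   (-(j+1), y+1) is half-defined and its eastern neighbour is defined, so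
   the cell below becomes half-defined with sum bit the parity of w_j / 3^q,
   q = y - B_(j+1) (long division propagates the sum bits southwards). *)
Lemma north_front (n j : nat) (y : Z) :
  bottom (S j) <= y < height -> Z.of_nat (S j) + height - y = Z.of_nat n + 2 ->
  below_rule (column_nl n (S j) (y + 1)) (column_nl n j (y + 1))
  = Half (sbit (numer j) (Z.to_nat (y - bottom (S j)))).
Proof.
  intros Hy Hn. set (N := numer j). set (q := Z.to_nat (y - bottom (S j))).
  rewrite column_nl_off_bottom by lia.
  assert (Hnorth : column n (S j) (y + 1) = Half (sbit N (S q))).
  { destruct (Z.eq_dec (y + 1) height) as [Ek|Ek].
    - rewrite Ek, column_top. rewrite sbit_small.
      + bdestr; [lia | reflexivity].
      + replace (S q) with (Z.to_nat (height - bottom (S j))) by lia. apply numer_bound.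
    - rewrite column_digit by lia. cbv zeta. bdestr; try lia.
      do 2 f_equal. lia. }
  destruct (east_cell_defined n j (y + 1) ltac:(lia) ltac:(lia)) as [s [c [Heast Hsc]]].
  rewrite Hnorth, Heast. cbn [below_rule]. f_equal.
  rewrite (sbit_step N q), Bool.xorb_assoc_reverse, (b2n_odd_xor s c), Hsc.
  do 3 f_equal. lia.
Qed.

Lemma north_idle (n j : nat) (y : Z) :
  bottom (S j) <= y < height -> Z.of_nat n + 2 < Z.of_nat (S j) + height - y ->
  below_rule (column_nl n (S j) (y + 1)) (column_nl n j (y + 1)) = Undef.
Proof.
  intros Hy Hn. rewrite column_nl_off_bottom by lia.
  destruct (Z.eq_dec (y + 1) height) as [Ek|Ek].
  - rewrite Ek, column_top, column_nl_top_waiting by lia. bdestr; [lia | reflexivity].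
  - rewrite column_digit by lia. cbv zeta. bdestr; try lia. reflexivity.
Qed.

Definition next_cell (n j : nat) (y : Z) : cell :=
  local_cell (column_nl n (S j) y) (column_nl n j y)
             (column_nl n (S j) (y + 1)) (column_nl n j (y + 1)).

Lemma next_cell_above (n j : nat) (y : Z) : height < y -> next_cell n j y = column (S n) (S j) y.
Proof.
  intros Hy. pose proof (bottom_lt_height (S j)). unfold next_cell.
  rewrite (column_nl_off_bottom n (S j) y), (column_nl_off_bottom n (S j) (y + 1)),
    !column_above by lia. reflexivity.
Qed.

(* Row k: the top cell is completed by the carry of the top digit of
   column -j, its sum bit being 0 since w_j < 3^(k - B_(j+1)). *)
Lemma next_cell_top (n j : nat) : next_cell n j height = column (S n) (S j) height.
Proof.
  pose proof (bottom_lt_height (S j)). unfold next_cell.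
  rewrite column_nl_off_bottom by lia. rewrite !column_top.
  destruct (Z.leb_spec (Z.of_nat (S j)) (Z.of_nat n)).
  { bdestr; try lia; reflexivity. }
  destruct (Z.leb_spec (Z.of_nat (S j)) (Z.of_nat (S n))).
  - destruct (east_cell_defined n j height ltac:(lia) ltac:(lia)) as [s [c [-> Hsc]]].
    unfold digit_cell. rewrite (sbit_small _ _ (numer_bound j)). cbn [local_cell east_rule b2n].
    rewrite !Nat.add_0_l, Hsc. do 4 f_equal. lia.
  - rewrite column_nl_top_waiting by lia. reflexivity.
Qed.

(* Rows strictly between B_(j+1) and k: a cell is half-defined by the front
   from the north, then defined by the carry from the east. *)
Lemma next_cell_digit (n j : nat) (y : Z) :
  bottom (S j) < y < height -> next_cell n j y = column (S n) (S j) y.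
Proof.
  intros Hy. unfold next_cell. rewrite column_nl_off_bottom by lia.
  rewrite !column_digit by lia. cbv zeta.
  set (D := Z.of_nat (S j) + height - y).
  destruct (Z.leb_spec D (Z.of_nat n)).
  { bdestr; try lia; reflexivity. }
  destruct (Z.eqb_spec (Z.of_nat n + 1) D).
  - destruct (east_cell_defined n j y ltac:(lia) ltac:(lia)) as [s [c [-> Hsc]]].
    bdestr; try lia. cbn [local_cell east_rule]. unfold digit_cell.
    rewrite <- Nat.add_assoc, Hsc. do 4 f_equal. lia.
  - cbn [local_cell]. destruct (Z.eqb_spec D (Z.of_nat n + 2)).
    + rewrite north_front by lia. bdestr; try lia. reflexivity.
    + rewrite north_idle by lia. bdestr; try lia. reflexivity.
Qed.

(* Row B_(j+1): the front brings sum bit 0 (w_j is even), then the cell waits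
   for the carry 1 given by the non-local rule when v_(j+1) is odd; its
   eastern neighbour stays quiet. *)
Lemma next_cell_bottom (n j : nat) :
  next_cell n j (bottom (S j)) = column (S n) (S j) (bottom (S j)).
Proof.
  pose proof (bottom_lt_height (S j)). set (y := bottom (S j)).
  set (D := Z.of_nat (S j) + height - y).
  assert (Heast : forall s, east_rule s (column_nl n j y) = Half s).
  { intros s. apply east_rule_quiet, (column_nl_quiet_east n (S j)); lia. }
  assert (Hnorth : Z.of_nat n + 1 < D ->
    below_rule (column_nl n (S j) (y + 1)) (column_nl n j (y + 1))
    = if D =? Z.of_nat n + 2 then Half false else Undef).
  { intros Hn. bdestr.
    - rewrite north_front by lia. fold y. rewrite Z.sub_diag.
      unfold sbit. rewrite Nat.pow_0_r, Nat.div_1_r, numer_even. reflexivity.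
    - apply north_idle; lia. }
  unfold next_cell, column_nl at 1, fires. rewrite Z.eqb_refl, !column_bottom.
  fold y D. cbv zeta. replace (Z.of_nat (S n)) with (Z.of_nat n + 1) by lia.
  destruct (Nat.odd (orbit (S j))); cbn [andb];
    bdestr; try lia; cbn [local_cell]; rewrite ?Heast, ?Hnorth by lia; bdestr; try lia;
    reflexivity.
Qed.

(* Below the bottom nothing ever happens: the cell above is at best
   half-defined and its north-eastern neighbour is quiet. *)
Lemma next_cell_below (n j : nat) (y : Z) :
  y < bottom (S j) -> next_cell n j y = column (S n) (S j) y.
Proof.
  intros Hy. unfold next_cell.
  rewrite column_nl_off_bottom, !column_below by lia. cbn [local_cell].
  destruct (Z.eq_dec (y + 1) (bottom (S j))).
  - apply below_rule_quiet, (column_nl_quiet_east n (S j)); lia.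
  - rewrite column_nl_off_bottom, column_below by lia. reflexivity.
Qed.

Lemma next_cell_column (n j : nat) (y : Z) : next_cell n j y = column (S n) (S j) y.
Proof.
  destruct (Z_lt_le_dec height y); [apply next_cell_above; auto|].
  destruct (Z.eq_dec y height) as [->|]; [apply next_cell_top|].
  destruct (Z_lt_le_dec (bottom (S j)) y); [apply next_cell_digit; lia|].
  destruct (Z.eq_dec y (bottom (S j))) as [->|]; [apply next_cell_bottom|].
  apply next_cell_below; lia.
Qed.

(* Column 0 only changes by the carry given to the cell (0,0). *)
Lemma column0_step (n : nat) (y : Z) : column_nl n 0 y = column (S n) 0 y.
Proof.
  unfold column_nl, fires, column. cbn [bottom].
  destruct (Nat.odd (orbit 0)); bdestr; try lia; auto.
Qed.

Lemma step_predicted (n : nat) : F (predicted n) = predicted (S n).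
Proof.
  unfold F. rewrite nonlocal_predicted.
  extensionality x. extensionality y. rewrite local_unfold.
  assert (Hundef : forall x' y', 0 < x' -> predicted_nl n x' y' = Undef).
  { intros. unfold predicted_nl. bdestr; [reflexivity | lia]. }
  destruct (Z_lt_le_dec 0 x).
  - rewrite !Hundef by lia. unfold predicted. bdestr; [reflexivity | lia].
  - set (m := Z.to_nat (- x)). assert (Ex : x = - Z.of_nat m) by lia.
    clearbody m. subst x. rewrite predicted_column. destruct m as [|j].
    + rewrite (Hundef (- Z.of_nat 0 + 1) y), (Hundef (- Z.of_nat 0 + 1) (y + 1)) by lia.
      rewrite local_cell_no_east.
      rewrite predicted_nl_column. apply column0_step.
    + replace (- Z.of_nat (S j) + 1) with (- Z.of_nat j) by lia.
      rewrite !predicted_nl_column. apply next_cell_column.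
Qed.

Lemma predicted_init : predicted 0 = c0 a.
Proof.
  extensionality x. extensionality y. unfold c0, predicted.
  pose proof (bottom_lt_height 0). cbn [bottom] in *. fold height.
  destruct (Z_lt_le_dec 0 x); [bdestr; try lia; auto|].
  destruct (Z.eq_dec x 0) as [->|].
  - replace (Z.to_nat (- 0)) with 0%nat by lia. unfold column.
    bdestr; try lia; auto; destruct (Nat.odd (orbit 0)); cbn [andb]; auto.
  - set (m := Z.to_nat (- x)). assert (Ex : x = - Z.of_nat m) by lia.
    destruct m as [|j]; [lia|]. pose proof (bottom_lt_height (S j)). unfold column.
    bdestr; try lia; auto; destruct (Nat.odd (orbit (S j))); bdestr; try lia; auto.
Qed.

Lemma iter_predicted (n : nat) : Nat.iter n F (c0 a) = predicted n.
Proof.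
  induction n as [|n IH]; [symmetry; apply predicted_init|].
  change (F (Nat.iter n F (c0 a)) = predicted (S n)). rewrite IH. apply step_predicted.
Qed.

(* Every time threshold in the closed form is below this bound, so cell
   (x, y) no longer changes after it. *)
Definition settle_time (x y : Z) : nat := Z.to_nat (Z.abs x + Z.abs height + Z.abs y + 2).

Lemma predicted_settled (n : nat) (x y : Z) :
  (settle_time x y <= n)%nat -> predicted n x y = predicted (settle_time x y) x y.
Proof.
  intros H. unfold settle_time in *. unfold predicted. bdestr; auto.
  set (m := Z.to_nat (- x)). assert (Ex : x = - Z.of_nat m) by lia.
  clearbody m. subst x. unfold column. destruct m as [|j].
  - destruct (Nat.odd (orbit 0)); bdestr; try lia; auto.
  - destruct (Nat.odd (orbit (S j))); bdestr; try lia; auto.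
Qed.

Lemma c_inf_predicted (x y : Z) : c_inf a x y = predicted (settle_time x y) x y.
Proof.
  unfold c_inf. destruct (excluded_middle_informative _) as [H|H].
  - destruct (constructive_indefinite_description _ H) as [c [N HN]]. cbn [proj1_sig].
    rewrite <- (HN (Nat.max N (settle_time x y))) by lia.
    rewrite iter_predicted. apply predicted_settled. lia.
  - exfalso. apply H. exists (predicted (settle_time x y) x y), (settle_time x y).
    intros n Hn. rewrite iter_predicted. apply predicted_settled; auto.
Qed.

Lemma c_inf_column (j : nat) (y : Z) :
  c_inf a (- Z.of_nat (S j)) y = column (settle_time (- Z.of_nat (S j)) y) (S j) y.
Proof. rewrite c_inf_predicted. apply predicted_column. Qed.

Lemma limit_below (j : nat) (y : Z) :
  y < bottom (S j) -> c_inf a (- Z.of_nat (S j)) y = Undef.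
Proof. intros. rewrite c_inf_column. apply column_below; auto. Qed.

Lemma limit_bottom (j : nat) :
  sum_defined (c_inf a (- Z.of_nat (S j)) (bottom (S j))) /\
  sum_bit_is (c_inf a (- Z.of_nat (S j)) (bottom (S j))) false.
Proof.
  rewrite c_inf_column, column_bottom. pose proof (bottom_lt_height (S j)).
  unfold settle_time. cbv zeta. destruct (Nat.odd (orbit (S j))); bdestr; try lia; simpl; auto.
Qed.

Lemma limit_digits (j : nat) (y : Z) : bottom (S j) < y <= height ->
  c_inf a (- Z.of_nat (S j)) y = digit_cell (numer j) (Z.to_nat (y - bottom (S j))).
Proof.
  intros Hy. rewrite c_inf_column. unfold settle_time.
  destruct (Z.eq_dec y height) as [->|].
  - rewrite column_top. bdestr; [reflexivity | lia].
  - rewrite column_digit by lia. cbv zeta. bdestr; try lia; reflexivity.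
Qed.

Lemma limit_colval (j : nat) :
  colval (c_inf a) (- Z.of_nat (S j)) (bottom (S j)) (Z.to_nat (height - bottom (S j)))
  = orbit (S j).
Proof.
  rewrite (colval_digits _ _ _ _ 0 (orbit (S j))).
  - rewrite Nat.pow_0_r, Nat.div_1_r. apply Nat.mod_small, orbit_bound.
  - intros i Hi. rewrite limit_digits, digit_cell_cval, <- orbit_succ by lia.
    f_equal. lia.
Qed.

End Evolution.

Theorem mainTheorem3 (z : nat) (alpha : list nat) (x0 : Z) :
  (1 <= z)%nat ->
  std_base3 alpha z ->
  x0 < 0 ->
  exists yb : Z,
    sum_defined (c_inf alpha x0 yb) /\
    (forall y : Z, y < yb -> ~ sum_defined (c_inf alpha x0 y)) /\
    sum_bit_is (c_inf alpha x0 yb) false /\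
    yb <= Z.of_nat (length alpha) /\
    (forall y : Z, yb < y <= Z.of_nat (length alpha) -> is_defined (c_inf alpha x0 y)) /\
    colval (c_inf alpha) x0 yb (Z.to_nat (Z.of_nat (length alpha) - yb))
      = Nat.iter (Z.to_nat (- x0)) T z.
Proof.
  intros Hz [Hdig [_ Hval]] Hx0. subst z.
  (* Column x0 is column -(j+1); its bottom row is the witness. *)
  set (j := Z.to_nat (- x0 - 1)). assert (Ex : x0 = - Z.of_nat (S j)) by lia.
  clearbody j. subst x0. replace (Z.to_nat (- - Z.of_nat (S j))) with (S j) by lia.
  change (Z.of_nat (length alpha)) with (height alpha).
  destruct (limit_bottom alpha Hdig Hz j) as [Hdef Hbit].
  pose proof (bottom_lt_height alpha Hdig Hz (S j)).
  exists (bottom alpha (S j)). split; [|split; [|split; [|split; [|split]]]].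
  - exact Hdef.
  - intros y Hy. rewrite (limit_below alpha Hdig Hz j y Hy). simpl. tauto.
  - exact Hbit.
  - lia.
  - intros y Hy. rewrite (limit_digits alpha Hdig Hz j y Hy). exact I.
  - exact (limit_colval alpha Hdig Hz j).
Qed.
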